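(* Let $\mathsf{\Omega}$ be a first-quantized BRST operator of a linear Lagrangian gauge system (odd, of ghost number $1$, nilpotent, and symplectic). For every ghost number $g$, the BRST state cohomology $H^g(\mathsf{\Omega})$ is a module, with the action $[A]\cdot[\phi]=[A\phi]$, of any Lie subalgebra of $H^{0}_{\rm sym}([\mathsf{\Omega},\cdot])$, and thus of any subalgebra of the Lie algebra of equivalence classes of linear variational symmetries.
   Context: Wave functions $\phi=e_\alpha\phi^\alpha(x)$ take values in a superspace with basis elements $e_\alpha$ graded by ghost number and parity, equipped with a constant nondegenerate odd antisymplectic form $\omega(\phi,\chi)=\int d^dx\,\omega_{\alpha\beta}\phi^\alpha\chi^\beta$, $\omega(\phi,\chi)=-(-1)^{|\phi||\chi|}\omega(\chi,\phi)$. A linear differential operator $A$ is symplectic if $\omega(A\phi,\chi)+(-1)^{|A||\phi|}\omega(\phi,A\chi)=0$. $\mathsf{\Omega}$ is odd, of ghost number $1$, symplectic, with $\mathsf{\Omega}^2=0$. $H^g(\mathsf{\Omega})$ is the space of ghost-number-$g$ wave functions $\phi$ with $\mathsf{\Omega}\phi=0$ modulo those of the form $\mathsf{\Omega}\chi$. $H^0_{\rm sym}([\mathsf{\Omega},\cdot])$ is the space of ghost-number-$0$ symplectic operators $K$ with $[\mathsf{\Omega},K]=0$ modulo $[\mathsf{\Omega},T]$ with $T$ symplectic of ghost number $-1$; with the commutator it is a Lie algebra isomorphic to the Lie algebra of equivalence classes of linear variational symmetries. *)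

From HB Require Import structures.
From mathcomp Require Import all_boot all_order all_algebra.
Set Implicit Arguments. Unset Strict Implicit. Unset Printing Implicit Defensive.
Import GRing.Theory.
Local Open Scope ring_scope.

Section BRST.
Variables (K : fieldType) (V : lmodType K).

Definition ksign (b : bool) : K := (-1) ^+ b.

Definition subspace (S : V -> Prop) :=
  S 0 /\ forall (a : K) u v, S u -> S v -> S (a *: u + v).

(* G g v : v is a wave function of ghost number g;
   P p v : v is homogeneous of parity p (true = odd). *)
Definition grading (G : int -> V -> Prop) (P : bool -> V -> Prop) :=
  (forall g, subspace (G g)) /\ (forall p, subspace (P p)).

Definition lin_op (A : V -> V) := forall (a : K) u v, A (a *: u + v) = a *: A u + A v.

Definition op_deg (G : int -> V -> Prop) (P : bool -> V -> Prop)
  (n : int) (p : bool) (A : V -> V) :=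
  (forall g v, G g v -> G (g + n) (A v)) /\ (forall q v, P q v -> P (q (+) p) (A v)).

Definition scomm (pA pB : bool) (A B : V -> V) : V -> V :=
  fun v => A (B v) - ksign (pA && pB) *: B (A v).

Definition odd_antisymplectic_form (P : bool -> V -> Prop) (om : V -> V -> K) :=
  [/\ (forall (a : K) u v w, om (a *: u + v) w = a * om u w + om v w),
      (forall (a : K) u v w, om w (a *: u + v) = a * om w u + om w v),
      (forall u, (forall v, om u v = 0) -> u = 0),
      (forall p q u v, P p u -> P q v -> om u v = - (ksign (p && q) * om v u)) &
      (forall p u v, P p u -> P p v -> om u v = 0)].

Definition symplectic (P : bool -> V -> Prop) (om : V -> V -> K) (pA : bool)
  (A : V -> V) :=
  forall p phi chi, P p phi -> om (A phi) chi + ksign (pA && p) * om phi (A chi) = 0.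

(* Dop : the class of linear differential operators (abstract): linear maps,
   closed under composition and linear combinations. *)
Definition diffop_class (Dop : (V -> V) -> Prop) :=
  [/\ (forall A, Dop A -> lin_op A),
      (forall A B, Dop A -> Dop B -> Dop (fun v => A (B v))) &
      (forall (a : K) A B, Dop A -> Dop B -> Dop (fun v => a *: A v + B v))].

Definition brst_operator G P om Dop (Om : V -> V) :=
  [/\ Dop Om, op_deg G P 1 true Om, symplectic P om true Om &
      forall v, Om (Om v) = 0].

(* representatives of H^0_sym([Om, .]) *)
Definition sym_cocycle G P om Dop (Om : V -> V) (A : V -> V) :=
  [/\ Dop A, op_deg G P 0 false A, symplectic P om false A &
      forall v, scomm true false Om A v = 0].

Definition sym_coboundary G P om Dop (Om : V -> V) (A : V -> V) :=
  exists T, [/\ Dop T, op_deg G P (-1) true T, symplectic P om true T &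
                forall v, A v = scomm true true Om T v].

(* A Lie subalgebra of H^0_sym, described by its preimage L in the space of
   cocycles: L contains all coboundaries, is a linear subspace, and is
   closed under the commutator. *)
Definition lie_subalgebra G P om Dop Om (L : (V -> V) -> Prop) :=
  [/\ (forall A, L A -> sym_cocycle G P om Dop Om A),
      (forall A, sym_coboundary G P om Dop Om A -> L A),
      (forall (a : K) A B, L A -> L B -> L (fun v => a *: A v + B v)) &
      (forall A B, L A -> L B -> L (scomm false false A B))].

Definition bclosed (G : int -> V -> Prop) (Om : V -> V) (g : int) (phi : V) :=
  G g phi /\ Om phi = 0.

Definition bexact (G : int -> V -> Prop) (Om : V -> V) (g : int) (phi : V) :=
  G g phi /\ exists chi, phi = Om chi.

Definition cohomologous G Om g (phi psi : V) :=
  [/\ bclosed G Om g phi, bclosed G Om g psi & bexact G Om g (phi - psi)].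

End BRST.

(* An even symplectic BRST cocycle A commutes with the BRST operator, so it maps closed states to closed
   states and exact states to exact states; hence [A phi] depends only on [phi], and linearly.  If
   A - B = [Om, T] with T odd, then (A - B) phi = Om (T phi) + T (Om phi) = Om (T phi) on closed phi,
   so cohomologous operators act identically.  The commutator of two cocycles is again one, and on a
   state it is literally A (B phi) - B (A phi), which makes the action a Lie algebra action. *)
From mathcomp Require Import all_boot all_order all_algebra.
Set Implicit Arguments. Unset Strict Implicit. Unset Printing Implicit Defensive.
Import GRing.Theory.
Local Open Scope ring_scope.

Section LinearAlgebra.
Variables (K : fieldType) (V : lmodType K).

Lemma lin_op0 (A : V -> V) : lin_op A -> A 0 = 0.
Proof. by move=> linA; have := linA (-1) 0 0; rewrite scaler0 add0r scaleN1r addNr. Qed.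

Lemma lin_opB (A : V -> V) x y : lin_op A -> A (x - y) = A x - A y.
Proof. by move=> linA; rewrite -scaleN1r addrC linA scaleN1r addrC. Qed.

Lemma subspaceB (S : V -> Prop) x y : subspace S -> S x -> S y -> S (x - y).
Proof. by move=> [_ closS] Sx Sy; have := closS (-1) y x Sy Sx; rewrite scaleN1r addrC. Qed.

Lemma scomm_evenE (pA pB : bool) (A B : V -> V) v :
  ~~ (pA && pB) -> scomm pA pB A B v = A (B v) - B (A v).
Proof. by move=> /negbTE ev; rewrite /scomm /ksign ev expr0 scale1r. Qed.

Lemma scomm_oddE (A B : V -> V) v : scomm true true A B v = A (B v) + B (A v).
Proof. by rewrite /scomm /ksign expr1 scaleN1r opprK. Qed.

End LinearAlgebra.

Section Cohomology.
Variables (K : fieldType) (V : lmodType K).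
Variables (G : int -> V -> Prop) (Om : V -> V) (g : int).
Hypotheses (linOm : lin_op Om) (subG : subspace (G g)).

Lemma bclosed_lin (a : K) phi psi :
  bclosed G Om g phi -> bclosed G Om g psi -> bclosed G Om g (a *: phi + psi).
Proof.
move=> [Gphi Om_phi] [Gpsi Om_psi]; split; first by case: subG => _; apply.
by rewrite linOm Om_phi Om_psi scaler0 addr0.
Qed.

Lemma cohomologous_exact phi psi chi :
  bclosed G Om g phi -> bclosed G Om g psi -> phi - psi = Om chi ->
  cohomologous G Om g phi psi.
Proof.
move=> cphi cpsi diff; split=> //; split; last by exists chi.
by apply: subspaceB; [exact: subG | case: cphi | case: cpsi].
Qed.

Lemma cohomologous_refl phi : bclosed G Om g phi -> cohomologous G Om g phi phi.
Proof. by move=> cphi; apply: (cohomologous_exact (chi := 0) cphi cphi); rewrite subrr lin_op0. Qed.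

End Cohomology.

Section Cocycles.
Variables (K : fieldType) (V : lmodType K).
Variables (G : int -> V -> Prop) (P : bool -> V -> Prop) (om : V -> V -> K).
Variables (Dop : (V -> V) -> Prop) (Om A : V -> V).
Hypotheses (diffop : diffop_class Dop) (cocA : sym_cocycle G P om Dop Om A).

Lemma sym_cocycle_lin : lin_op A.
Proof. by case: diffop cocA => linD _ _ [DA _ _ _]; exact: linD. Qed.

Lemma sym_cocycle_ghost g v : G g v -> G g (A v).
Proof. by case: cocA => _ [degA _] _ _ /degA; rewrite addr0. Qed.

Lemma sym_cocycle_commute v : Om (A v) = A (Om v).
Proof. by case: cocA => _ _ _ /(_ v); rewrite scomm_evenE // => /eqP; rewrite subr_eq0 => /eqP. Qed.

Lemma sym_cocycle_bclosed g phi : bclosed G Om g phi -> bclosed G Om g (A phi).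
Proof.
move=> [Gphi Om_phi]; split; first exact: sym_cocycle_ghost.
by rewrite sym_cocycle_commute Om_phi lin_op0 //; exact: sym_cocycle_lin.
Qed.

Lemma sym_cocycle_cohomologous g phi psi :
  cohomologous G Om g phi psi -> cohomologous G Om g (A phi) (A psi).
Proof.
have linA := sym_cocycle_lin.
move=> [cphi cpsi [Gdiff [chi diff]]]; split; try exact: sym_cocycle_bclosed.
split; first by rewrite -lin_opB //; exact: sym_cocycle_ghost.
by exists (A chi); rewrite -lin_opB // diff sym_cocycle_commute.
Qed.

End Cocycles.

Lemma sym_coboundary_exact (K : fieldType) (V : lmodType K)
  (G : int -> V -> Prop) (P : bool -> V -> Prop) (om : V -> V -> K)
  (Dop : (V -> V) -> Prop) (Om C : V -> V) (g : int) phi :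
  diffop_class Dop -> sym_coboundary G P om Dop Om C -> bclosed G Om g phi ->
  exists chi, C phi = Om chi.
Proof.
case=> linD _ _ [T [DT _ _ defC]] [_ Om_phi]; exists (T phi).
by rewrite defC scomm_oddE Om_phi lin_op0 ?addr0 //; exact: linD.
Qed.

Theorem proposition3 (K : fieldType) (V : lmodType K)
  (G : int -> V -> Prop) (P : bool -> V -> Prop) (om : V -> V -> K)
  (Dop : (V -> V) -> Prop) (Om : V -> V) (L : (V -> V) -> Prop) :
  grading G P ->
  odd_antisymplectic_form P om ->
  diffop_class Dop ->
  brst_operator G P om Dop Om ->
  lie_subalgebra G P om Dop Om L ->
  forall g : int,
  (* the action [A].[phi] = [A phi] is well defined on H^g(Om) *)
  [/\ (forall A phi, L A -> bclosed G Om g phi -> bclosed G Om g (A phi)),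
      (forall A phi psi, L A -> cohomologous G Om g phi psi ->
          cohomologous G Om g (A phi) (A psi)),
      (forall A B phi, L A -> L B ->
          sym_coboundary G P om Dop Om (fun v => A v - B v) ->
          bclosed G Om g phi -> cohomologous G Om g (A phi) (B phi)),
  (* it is bilinear *)
      (forall (a : K) A B phi psi, L A -> L B -> bclosed G Om g phi ->
          bclosed G Om g psi ->
          cohomologous G Om g ((fun v => a *: A v + B v) phi) (a *: A phi + B phi)
          /\ cohomologous G Om g (A (a *: phi + psi)) (a *: A phi + A psi)) &
  (* and it is a Lie algebra action: [[A],[B]].x = [A].([B].x) - [B].([A].x) *)
      (forall A B phi, L A -> L B -> bclosed G Om g phi ->
          cohomologous G Om g (scomm false false A B phi) (A (B phi) - B (A phi)))].
Proof.
move=> [subG _] _ diffop [DOm _ _ _] [cocL _ linL commL] g.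
have linOm : lin_op Om by case: diffop => linD _ _; exact: linD.
have closedL A phi : L A -> bclosed G Om g phi -> bclosed G Om g (A phi).
  by move=> /cocL cocA; exact: (sym_cocycle_bclosed diffop cocA).
split=> [//|A phi psi /cocL cocA|A B phi LA LB cobAB cphi|a A B phi psi LA LB cphi cpsi|A B phi LA LB cphi].
- exact: (sym_cocycle_cohomologous diffop cocA).
- have [chi diff] := sym_coboundary_exact diffop cobAB cphi.
  by apply: (cohomologous_exact (subG g) _ _ diff); exact: closedL.
- have linA := sym_cocycle_lin diffop (cocL _ LA).
  split; first by apply/cohomologous_refl/(closedL _ _ (linL a _ _ LA LB) cphi).
  rewrite linA; apply: cohomologous_refl => //; rewrite -linA.
  exact/(closedL _ _ LA)/bclosed_lin.
- rewrite scomm_evenE //; apply: cohomologous_refl => //.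
  by have := closedL _ _ (commL _ _ LA LB) cphi; rewrite scomm_evenE.
Qed.
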